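(* Let $\mathcal{X}\in\mathbb{IR}^n$ be a box, $w\in\mathbb{R}^n_{>0}$, and let $f=[f_k]:\mathbb{R}^n\to\mathbb{R}^n$ and $g_p=[g_{p,k}]:\mathbb{R}^n\to\mathbb{R}^n$ ($p\in\{1,\dots,d\}$) be functions such that for every $k\in\{1,\dots,n\}$ and $p\in\{1,\dots,d\}$, $f_k$ and $g_{p,k}$ are Lipschitz on $\mathcal{X}$ with respect to $\|\cdot\|_w$, with Lipschitz constants $L^w_{f_k}\le \overline{f}_k$ and $L^w_{g_{p,k}}\le \overline{g}_{p,k}$ for given numbers $\overline{f}_k,\overline{g}_{p,k}\in\mathbb{R}_+$. Let $\mathscr{E}_j=\{(x^i,C_{\mathcal{F}^i},C_{\mathcal{G}^i})\}_{i=0}^{j-1}$ be a finite set with $x^i\in\mathcal{X}$, $C_{\mathcal{F}^i}=[C_{\mathcal{F}^i_k}]\in\mathbb{IR}^n$ and $C_{\mathcal{G}^i}=[C_{\mathcal{G}^i_{p,k}}]\in\mathbb{IR}^{d\times n}$ satisfying $f_k(x^i)\in C_{\mathcal{F}^i_k}$ and $g_{p,k}(x^i)\in C_{\mathcal{G}^i_{p,k}}$ for all $i$, $p\in\{1,\dots,d\}$, $k\in\{1,\dots,n\}$. Let $\boldsymbol{\eta}^w:\mathbb{IR}^n\to\mathbb{IR}$ be any interval extension of the weighted norm $\|\cdot\|_w$, i.e. $\boldsymbol{\eta}^w(\mathcal{B})\supseteq\{\|y\|_w: y\in\mathcal{B}\}$ for every $\mathcal{B}\in\mathbb{IR}^n$.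 Define interval-valued functions $\boldsymbol{f}=[\boldsymbol{f}_k]$ and $\boldsymbol{g}_p=[\boldsymbol{g}_{p,k}]$ on $\mathbb{IR}^n$ by $$\boldsymbol{f}_k(\mathcal{A})=\bigcap_{i=0}^{j-1}\Big(C_{\mathcal{F}^i_k}+[-1,1]\,\overline{f}_k\,\boldsymbol{\eta}^w(\mathcal{A}-x^i)\Big),\qquad \boldsymbol{g}_{p,k}(\mathcal{A})=\bigcap_{i=0}^{j-1}\Big(C_{\mathcal{G}^i_{p,k}}+[-1,1]\,\overline{g}_{p,k}\,\boldsymbol{\eta}^w(\mathcal{A}-x^i)\Big).$$ Then for every interval $\mathcal{A}\in\mathbb{IR}^n$ with $\mathcal{A}\subseteq\mathcal{X}$, $\{f_k(x):x\in\mathcal{A}\}\subseteq\boldsymbol{f}_k(\mathcal{A})$ and $\{g_{p,k}(x):x\in\mathcal{A}\}\subseteq\boldsymbol{g}_{p,k}(\mathcal{A})$ for all $k\in\{1,\dots,n\}$, $p\in\{1,\dots,d\}$.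
   Context: $\mathbb{IR}$ denotes the set of closed bounded real intervals $[a,b]$, $a\le b$; $\mathbb{IR}^n$ and $\mathbb{IR}^{d\times n}$ denote interval vectors and interval matrices (componentwise). Arithmetic on intervals is standard interval arithmetic: $\mathcal{A}+\mathcal{B}=\{a+b\}$, $\mathcal{A}\mathcal{B}=\{ab\}$, etc., with $a\in\mathcal{A},b\in\mathcal{B}$, and a real number is identified with a degenerate interval; for an interval vector $\mathcal{A}$ and point $x$, $\mathcal{A}-x$ is the componentwise interval difference. Intersections and inclusions of interval vectors/matrices are componentwise. The weighted norm is $\|x\|_w=\sqrt{\sum_{i=1}^n(w_ix_i)^2}$, and the Lipschitz constant of $h:\mathcal{X}\to\mathbb{R}$ with respect to it is $L^w_h=\sup\{L: |h(x)-h(y)|\le L\|x-y\|_w,\ x,y\in\mathcal{X}, x\ne y\}$. *)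

From HB Require Import structures.
From mathcomp Require Import all_boot all_order all_algebra.
From mathcomp Require Import reals.
Set Implicit Arguments. Unset Strict Implicit. Unset Printing Implicit Defensive.
Import Order.TTheory GRing.Theory Num.Theory.
Local Open Scope ring_scope.

(* A closed bounded real interval [a,b] is represented by its endpoints (a,b);
   it belongs to IR when a <= b. *)
Definition ritv (R : realType) := (R * R)%type.
Definition ritv_wf (R : realType) (A : ritv R) : Prop := A.1 <= A.2.
Definition in_ritv (R : realType) (y : R) (A : ritv R) : Prop := A.1 <= y <= A.2.

Definition pt (R : realType) (n : nat) := 'I_n -> R.
Definition box (R : realType) (n : nat) := 'I_n -> ritv R.
Definition box_wf (R : realType) n (B : box R n) : Prop := forall k, ritv_wf (B k).
Definition in_box (R : realType) n (y : pt R n) (B : box R n) : Prop :=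
  forall k, in_ritv (y k) (B k).
Definition box_sub (R : realType) n (A B : box R n) : Prop :=
  forall k, (B k).1 <= (A k).1 /\ (A k).2 <= (B k).2.
Definition box_subpt (R : realType) n (A : box R n) (x : pt R n) : box R n :=
  fun k => ((A k).1 - x k, (A k).2 - x k).

Definition wnorm (R : realType) n (w x : pt R n) : R :=
  Num.sqrt (\sum_(i < n) (w i * x i) ^+ 2).

Definition wlipschitz_on (R : realType) n (X : box R n) (w : pt R n)
    (h : pt R n -> R) (L : R) : Prop :=
  forall x y, in_box x X -> in_box y X ->
    `|h x - h y| <= L * wnorm w (fun k => x k - y k).

Definition wnorm_ext (R : realType) n (w : pt R n) (eta : box R n -> ritv R) : Prop :=
  forall B, box_wf B -> forall y, in_box y B -> in_ritv (wnorm w y) (eta B).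

(* The (set-valued, exact interval arithmetic) meaning of
   \bigcap_{i<j} ( C^i + [-1,1] * cbar * eta(A - x^i) ). *)
Definition enclosure (R : realType) n j (w : pt R n) (eta : box R n -> ritv R)
    (xs : 'I_j -> pt R n) (C : 'I_j -> ritv R) (cbar : R) (A : box R n) (y : R) : Prop :=
  forall i : 'I_j, exists c t e,
    [/\ in_ritv c (C i), -1 <= t <= 1, in_ritv e (eta (box_subpt A (xs i))) &
        y = c + t * cbar * e].

(* For each sample x^i, the Lipschitz bound gives |h x - h x^i| <= L * ||x - x^i||_w,
   so h x = h x^i + t * L * ||x - x^i||_w for some t in [-1, 1]; moreover
   h x^i lies in C^i, and ||x - x^i||_w lies in eta (A - x^i) because x - x^i
   lies in the box A - x^i. *)
From mathcomp Require Import all_boot all_order all_algebra.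
From mathcomp Require Import reals.
Set Implicit Arguments. Unset Strict Implicit. Unset Printing Implicit Defensive.
Import Order.TTheory GRing.Theory Num.Theory.
Local Open Scope ring_scope.

Lemma ler_norm_scale_unit (R : realFieldType) (u c : R) :
  `|u| <= c -> exists2 t : R, -1 <= t <= 1 & u = t * c.
Proof.
have [->|c_neq0] := eqVneq c 0.
  by rewrite normr_le0 => /eqP ->; exists 0; rewrite ?mul0r ?lerN10 ?ler01.
move=> le_u_c.
have c_gt0 : 0 < c by rewrite lt_def c_neq0 (le_trans (normr_ge0 u)).
exists (u / c); last by rewrite divfK.
by rewrite -ler_norml normf_div (gtr0_norm c_gt0) ler_pdivrMr // mul1r.
Qed.

Section Boxes.
Variables (R : realType) (n : nat).
Implicit Types (A B : box R n) (x y : pt R n).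

Lemma in_box_sub A B x : box_sub A B -> in_box x A -> in_box x B.
Proof.
move=> subAB xA k; have [le1 le2] := subAB k; have /andP[xk1 xk2] := xA k.
by apply/andP; split; [exact: le_trans xk1 | exact: le_trans le2].
Qed.

Lemma box_subpt_wf A x : box_wf A -> box_wf (box_subpt A x).
Proof. by move=> wfA k; rewrite /ritv_wf /= lerD2r; exact: wfA. Qed.

Lemma in_box_subpt A x y :
  in_box y A -> in_box (fun k => y k - x k) (box_subpt A x).
Proof. by move=> yA k; rewrite /in_ritv /= !lerD2r; exact: yA. Qed.

End Boxes.

Lemma wlipschitz_enclosure (R : realType) (n j : nat) (X : box R n) (w : pt R n)
  (h : pt R n -> R) (L : R) (hL : wlipschitz_on X w h L)
  (xs : 'I_j -> pt R n) (hxs : forall i, in_box (xs i) X)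
  (C : 'I_j -> ritv R) (hC : forall i, in_ritv (h (xs i)) (C i))
  (eta : box R n -> ritv R) (heta : wnorm_ext w eta)
  (A : box R n) (hA : box_wf A) (hAX : box_sub A X) (x : pt R n) :
  in_box x A -> enclosure w eta xs C L A (h x).
Proof.
move=> xA i; set e := wnorm w (fun k => x k - xs i k).
have e_in_eta : in_ritv e (eta (box_subpt A (xs i))).
  exact: heta _ (box_subpt_wf _ hA) _ (in_box_subpt _ xA).
have [t t_unit dh] := ler_norm_scale_unit (hL x (xs i) (in_box_sub hAX xA) (hxs i)).
exists (h (xs i)), t, e; split => //.
by rewrite -mulrA -dh addrC subrK.
Qed.

Theorem lemma1 (R : realType) (n d j : nat)
  (X : box R n) (hX : box_wf X)
  (w : pt R n) (hw : forall k, 0 < w k)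
  (f : 'I_n -> pt R n -> R) (g : 'I_d -> 'I_n -> pt R n -> R)
  (fbar : 'I_n -> R) (gbar : 'I_d -> 'I_n -> R)
  (hfbar : forall k, 0 <= fbar k) (hgbar : forall p k, 0 <= gbar p k)
  (hfL : forall k, wlipschitz_on X w (f k) (fbar k))
  (hgL : forall p k, wlipschitz_on X w (g p k) (gbar p k))
  (xs : 'I_j -> pt R n) (hxs : forall i, in_box (xs i) X)
  (CF : 'I_j -> 'I_n -> ritv R) (CG : 'I_j -> 'I_d -> 'I_n -> ritv R)
  (hCFwf : forall i k, ritv_wf (CF i k)) (hCGwf : forall i p k, ritv_wf (CG i p k))
  (hCF : forall i k, in_ritv (f k (xs i)) (CF i k))
  (hCG : forall i p k, in_ritv (g p k (xs i)) (CG i p k))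
  (eta : box R n -> ritv R) (heta : wnorm_ext w eta) :
  forall A : box R n, box_wf A -> box_sub A X ->
    (forall k x, in_box x A ->
       enclosure w eta xs (fun i => CF i k) (fbar k) A (f k x)) /\
    (forall p k x, in_box x A ->
       enclosure w eta xs (fun i => CG i p k) (gbar p k) A (g p k x)).
Proof.
move=> A wfA subAX; split.
- move=> k; exact: (wlipschitz_enclosure (C := CF^~ k) (hfL k) hxs
    (hCF^~ k) heta wfA subAX).
- move=> p k; exact: (wlipschitz_enclosure (C := fun i => CG i p k) (hgL p k) hxs
    (fun i => hCG i p k) heta wfA subAX).
Qed.
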